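(* Consider a radial three-phase distribution grid on buses $\{0,\ldots,N\}$ (feeder bus $0$, each bus $n\geq1$ with parent $\pi_n<n$, line $n$ joining $\pi_n$ and $n$), with symmetric phase impedance matrices $\mathbf{Z}_n=\mathbf{Z}_n^{\top}\in\mathbb{C}^{3\times3}$, and let $\mathbf{X}:=2\mathbf{M}\,\mathrm{bdiag}(\{\mathrm{Im}[\tilde{\mathbf{Z}}_n]\})\mathbf{M}^{\top}\in\mathbb{R}^{3N\times3N}$, assumed invertible. Let $\mathbf{U}\mathbf{\Lambda}\mathbf{U}^{\top}$ be an eigenvalue decomposition of $\mathbf{X}\mathbf{X}^{\top}$ ($\mathbf{U}$ orthogonal, $\mathbf{\Lambda}$ diagonal with positive entries). If \[\mu\in\left(0,\ \lambda_{\min}\!\left(\mathbf{\Lambda}^{-1/2}\mathbf{U}^{\top}(\mathbf{X}+\mathbf{X}^{\top})\mathbf{U}\mathbf{\Lambda}^{-1/2}\right)\right),\] then $\|\mathbf{I}-\mu\mathbf{X}\|_2<1$.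
   Context: $\tilde{\mathbf{Z}}_n:=\operatorname{diag}(\boldsymbol{\alpha}^* )\mathbf{Z}_n\operatorname{diag}(\boldsymbol{\alpha})$ with $\boldsymbol{\alpha}:=[1~\alpha~\alpha^2]^{\top}$, $\alpha=e^{-j2\pi/3}$; $^*$ is entrywise conjugation and $\mathrm{Im}$ is entrywise. $\mathbf{M}:=\mathbf{T}(\mathbf{I}_3\otimes\mathbf{F})\mathbf{T}^{\top}$, where: the full branch-bus incidence matrix $\tilde{\mathbf{A}}=[\mathbf{a}_0~\mathbf{A}]\in\mathbb{R}^{N\times(N+1)}$ has in row $n$ entry $+1$ at column $\pi_n$, $-1$ at column $n$, zeros elsewhere; $\mathbf{A}$ is the reduced incidence matrix (column of bus $0$ removed); $\mathbf{F}:=-\mathbf{A}^{-1}$; $\mathbf{T}:=[\mathbf{I}_3\otimes\mathbf{e}_1^{\top};\ldots;\mathbf{I}_3\otimes\mathbf{e}_N^{\top}]$ (blocks stacked vertically) with $\mathbf{e}_n$ the $n$-th column of $\mathbf{I}_N$. $\mathrm{bdiag}$ denotes a block diagonal matrix. $\|\cdot\|_2$ is the spectral norm; $\lambda_{\min}$ is the smallest eigenvalue of a symmetric matrix. *)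

From HB Require Import structures.
From mathcomp Require Import all_boot all_order all_algebra.
From mathcomp Require Import classical_sets reals trigo.
From mathcomp.real_closed Require Import complex mxtens.

Set Implicit Arguments.
Unset Strict Implicit.
Unset Printing Implicit Defensive.

Import Order.TTheory GRing.Theory Num.Theory.
Local Open Scope ring_scope.
Local Open Scope classical_set_scope.

Section Grid.
Variable R : realType.

(* Index conventions: line/bus n (1 <= n <= N) is represented by i : 'I_N with
   n = i.+1; bus 0 is the feeder.  The parent pi_n of bus i.+1 is [par i]
   (a natural number <= i).  Row-stacked / Kronecker indices follow mxtens:
   the index (a, b) of 'I_(m * n) is a * n + b (mxtens_index). *)

Definition inc_full (N : nat) (par : 'I_N -> nat) : 'M[R]_(N, N.+1) :=
  \matrix_(i < N, j < N.+1)
    ((nat_of_ord j == par i)%:R - (nat_of_ord j == i.+1)%:R).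

Definition inc_red (N : nat) (par : 'I_N -> nat) : 'M[R]_N :=
  \matrix_(i < N, j < N) inc_full par i (lift ord0 j).

Definition Fmx (N : nat) (par : 'I_N -> nat) : 'M[R]_N := - invmx (inc_red par).

Definition e_row (N : nat) (n : 'I_N) : 'M[R]_(1, N) := delta_mx 0 n.

(* T := [I_3 (x) e_1^T; ... ; I_3 (x) e_N^T]  (blocks stacked vertically) *)
Definition Tmx (N : nat) : 'M[R]_(N * 3, 3 * N) :=
  \matrix_(k < N * 3, c < 3 * N)
    (tensmx (1%:M : 'M[R]_3) (e_row (mxtens_unindex k).1))
      (mxtens_index ((mxtens_unindex k).2, (ord0 : 'I_1))) c.

Definition Mmx (N : nat) (par : 'I_N -> nat) : 'M[R]_(N * 3) :=
  Tmx N *m tensmx (1%:M : 'M[R]_3) (Fmx par) *m (Tmx N)^T.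

Definition bdiag (N : nat) (B : 'I_N -> 'M[R]_3) : 'M[R]_(N * 3) :=
  \matrix_(k < N * 3, l < N * 3)
    (if (mxtens_unindex k).1 == (mxtens_unindex l).1
     then B (mxtens_unindex k).1 (mxtens_unindex k).2 (mxtens_unindex l).2
     else 0).

Definition alpha : R[i] :=
  Complex (cos (2 * pi / 3)) (- sin (2 * pi / 3)).

Definition alpha_vec : 'rV[R[i]]_3 := \row_(p < 3) alpha ^+ p.

Definition Ztilde (Z : 'M[R[i]]_3) : 'M[R[i]]_3 :=
  diag_mx (map_mx (@conjc R) alpha_vec) *m Z *m diag_mx alpha_vec.

Definition Xmx (N : nat) (par : 'I_N -> nat) (Z : 'I_N -> 'M[R[i]]_3)
  : 'M[R]_(N * 3) :=
  2%:R *: (Mmx par *m bdiag (fun n => map_mx (@complex.Im R) (Ztilde (Z n)))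
           *m (Mmx par)^T).

Definition vnorm (n : nat) (v : 'cV[R]_n) : R := Num.sqrt (\sum_i v i 0 ^+ 2).

Definition spectral_norm (m n : nat) (B : 'M[R]_(m, n)) : R :=
  sup [set vnorm (B *m x) | x in [set x : 'cV[R]_n | vnorm x = 1]].

Definition lambda_min (n : nat) (S : 'M[R]_n) : R :=
  inf [set a : R | eigenvalue S a].

End Grid.

From HB Require Import structures.
From mathcomp Require Import all_boot all_order all_algebra.
From mathcomp Require Import reals.
From mathcomp.real_closed Require Import complex.
From mathcomp Require Import boolp classical_sets.
From mathcomp Require Import sesquilinear spectral.
From mathcomp Require Import lra.

Set Implicit Arguments.
Unset Strict Implicit.
Unset Printing Implicit Defensive.

Import Order.TTheory GRing.Theory Num.Theory.
Local Open Scope ring_scope.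

(* Let D := diag(d) and S := D^-1/2 U^T (X + X^T) U D^-1/2.  For a vector y
   put w := D^1/2 U^T y; then w^T S w = 2 y^T X^T y and
   |w|^2 = |X^T y|^2 >= (min_k d_k) |y|^2.  As the spectrum of S lies above
   mu + e for some e > 0, this gives
   |(I - mu X)^T y|^2 = |y|^2 - 2 mu y^T X^T y + mu^2 |X^T y|^2
                     <= (1 - mu e min_k d_k) |y|^2,
   so (I - mu X)^T, and hence I - mu X, is a strict contraction. *)

Lemma pos_lbound (R : realFieldType) n (f : 'I_n -> R) :
  (forall j, 0 < f j) -> exists2 e : R, 0 < e & forall j, e <= f j.
Proof.
move=> f_gt0; have inv_ge0 : 0 <= \sum_j (f j)^-1.
  by apply: sumr_ge0 => j _; rewrite invr_ge0 ltW.
exists (1 + \sum_j (f j)^-1)^-1 => [|j]; first by rewrite invr_gt0 ltr_wpDr.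
rewrite -[f j]invrK lef_pV2 ?posrE ?invr_gt0 ?ltr_wpDr //.
rewrite (bigD1 j) //= addrCA lerDl addr_ge0 //.
by apply: sumr_ge0 => k _; rewrite invr_ge0 ltW.
Qed.

Lemma sym_quadform_ge_spectrum (R : rcfType) n (S : 'M[R]_n) : S^T = S ->
  exists2 r : 'I_n -> R, (forall j, eigenvalue S (r j)) &
    forall c, (forall j, c <= r j) ->
    forall v : 'cV[R]_n, c * (v^T *m v) 0 0 <= (v^T *m S *m v) 0 0.
Proof.
(* Diagonalize S as a Hermitian matrix over [R[i]]; its spectrum is real. *)
move=> trS; pose f := real_complex R; pose SC := map_mx f S.
have conjf x : (f x)^* = f x by apply/conj_Creal/complex_realP; exists x.
have herm : SC \is hermsymmx.
  apply/is_hermitianmxP; rewrite expr0 scale1r; apply/matrixP=> i j.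
  by rewrite !mxE conjf -{1}trS mxE.
have /orthomx_spectralP := hermitian_normalmx herm.
have P_unitary := spectral_unitarymx SC.
set P := spectralmx SC; set sp := spectral_diag SC.
rewrite invmx_unitary // => SC_diag.
have PPt : P *m (P^t*)%sesqui = 1%:M by apply/unitarymxP.
have /mxOverP sp_real := hermitian_spectral_diag_real herm.
pose r j := complex.Re (sp 0 j).
have spr j : sp 0 j = f (r j) by rewrite /r /f RRe_real //; apply: sp_real.
exists r => [j|c c_le v].
  rewrite eigenvalue_root_char -(fmorph_root f) map_char_poly.
  rewrite -eigenvalue_root_char; apply/eigenvalueP; exists (row j P).
    rewrite -/SC -row_mul SC_diag !mulmxA PPt mul1mx mul_diag_mx.
    by apply/rowP=> k; rewrite !mxE spr.
  apply/eqP=> /(congr1 (mulmx^~ (P^t*)%sesqui)).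
  rewrite -row_mul PPt mul0mx row1 => /rowP /(_ j).
  by rewrite !mxE !eqxx => /eqP; rewrite oner_eq0.
pose y := P *m map_mx f v.
have yt : (map_mx f v)^T *m (P^t*)%sesqui = (y^t*)%sesqui.
  rewrite /y trmx_mul map_mxM; congr (_ *m _).
  by apply/matrixP=> i j; rewrite !mxE; apply/esym/conjf.
have vSv : f ((v^T *m S *m v) 0 0) = \sum_k f (r k) * ((y k 0)^* * y k 0).
  transitivity (map_mx f (v^T *m S *m v) 0 0); first by rewrite [RHS]mxE.
  rewrite !map_mxM -map_trmx -/SC SC_diag !mulmxA yt.
  rewrite -[_ *m P *m _]mulmxA -/y mul_mx_diag mxE.
  by apply: eq_bigr => k _; rewrite !mxE spr mulrCA mulrA.
have vv : f ((v^T *m v) 0 0) = \sum_k (y k 0)^* * y k 0.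
  transitivity (map_mx f (v^T *m v) 0 0); first by rewrite [RHS]mxE.
  rewrite map_mxM -map_trmx -{2}(mul1mx (map_mx f v)) -(mulmx1C PPt).
  rewrite !mulmxA yt.
  by rewrite -mulmxA mxE; apply: eq_bigr => k _; rewrite !mxE.
rewrite -subr_ge0 -ler0c rmorphB rmorphM /= -/f vSv vv mulr_sumr -sumrB.
apply: sumr_ge0 => k _; rewrite -mulrBl mulr_ge0 //; last first.
  by rewrite mulrC mul_conjC_ge0.
by rewrite -rmorphB ler0c subr_ge0.
Qed.

Lemma sym_eigenvalue_gap (R : rcfType) n (S : 'M[R]_n) (c : R) :
  S^T = S -> (forall a, eigenvalue S a -> c < a) ->
  exists2 e : R, 0 < e &
    forall v : 'cV[R]_n, (c + e) * (v^T *m v) 0 0 <= (v^T *m S *m v) 0 0.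
Proof.
move=> /sym_quadform_ge_spectrum [r r_eig r_bound] c_lt.
have r_gap j : 0 < r j - c by rewrite subr_gt0 c_lt.
have [e e_gt0 e_le] := pos_lbound r_gap.
by exists e => //; apply: r_bound => j; rewrite -lerBrDl e_le.
Qed.

Section QuadraticForm.
Variable R : realFieldType.

Lemma trmx_mx11 (A : 'M[R]_1) : A^T = A.
Proof. by rewrite [A]mx11_scalar tr_scalar_mx. Qed.

Lemma trmx_mulC n (u v : 'cV[R]_n) : u^T *m v = v^T *m u.
Proof. by rewrite -[LHS]trmx_mx11 trmx_mul trmxK. Qed.

Lemma sqnormE n (v : 'cV[R]_n) : (v^T *m v) 0 0 = \sum_i v i 0 ^+ 2.
Proof. by rewrite mxE; apply: eq_bigr => i _; rewrite mxE expr2. Qed.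

Lemma sqnorm_ge0 n (v : 'cV[R]_n) : 0 <= (v^T *m v) 0 0.
Proof. by rewrite sqnormE; apply: sumr_ge0 => i _; rewrite sqr_ge0. Qed.

Lemma dot_le_sqnorm n (u v : 'cV[R]_n) :
  2 * (u^T *m v) 0 0 <= (u^T *m u) 0 0 + (v^T *m v) 0 0.
Proof.
rewrite !sqnormE mxE mulr_sumr -big_split /=; apply: ler_sum => i _.
by rewrite mxE; have := sqr_ge0 (u i 0 - v i 0); nra.
Qed.

Lemma sqnorm_subZ n (u v : 'cV[R]_n) t :
  ((u - t *: v)^T *m (u - t *: v)) 0 0 =
  (u^T *m u) 0 0 - 2 * t * (u^T *m v) 0 0 + t ^+ 2 * (v^T *m v) 0 0.
Proof.
have -> : (u - t *: v)^T = u^T - t *: v^T by apply/matrixP=> i j; rewrite !mxE.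
rewrite mulmxBl !mulmxBr -!scalemxAl -!scalemxAr.
by rewrite [v^T *m u]trmx_mulC scalerA !mxE; lra.
Qed.

(* Since [x^T A^T (A x) <= (|x|^2 + |A^T (A x)|^2) / 2], a contraction bound
   for [A^T] transfers to [A]. *)
Lemma sqnorm_mulmx_le_tr n (A : 'M[R]_n) (c : R) :
  (forall y : 'cV[R]_n,
    ((A^T *m y)^T *m (A^T *m y)) 0 0 + c * (y^T *m y) 0 0 <= (y^T *m y) 0 0) ->
  forall x : 'cV[R]_n,
    (1 + c) * ((A *m x)^T *m (A *m x)) 0 0 <= (x^T *m x) 0 0.
Proof.
move=> A_tr x; have := dot_le_sqnorm x (A^T *m (A *m x)).
have := A_tr (A *m x); rewrite [x^T *m _]mulmxA -trmx_mul; lra.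
Qed.

End QuadraticForm.

Section Whitening.
Variables (R : rcfType) (n : nat) (X U : 'M[R]_n) (d : 'I_n -> R).
Hypothesis U_orth : U^T *m U = 1%:M.
Hypothesis d_gt0 : forall k, 0 < d k.
Hypothesis XXt_eig : X *m X^T = U *m diag_mx (\row_k d k) *m U^T.

Let Dsqrt := diag_mx (\row_k Num.sqrt (d k)).
Let Dsqrt_inv := diag_mx (\row_k (Num.sqrt (d k))^-1).
Let S := Dsqrt_inv *m U^T *m (X + X^T) *m U *m Dsqrt_inv.

Let UUt : U *m U^T = 1%:M. Proof. exact: mulmx1C. Qed.

Let Dsqrt_invK : Dsqrt_inv *m Dsqrt = 1%:M.
Proof.
rewrite mulmx_diag; apply/matrixP=> i j; rewrite !mxE.
by case: eqP => // _; rewrite mulVf // gt_eqF // sqrtr_gt0.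
Qed.

Let Dsqrt_sqr : Dsqrt *m Dsqrt = diag_mx (\row_k d k).
Proof.
rewrite mulmx_diag; congr diag_mx; apply/rowP=> k.
by rewrite !mxE -expr2 sqr_sqrtr // ltW.
Qed.

Lemma whitened_sym : S^T = S.
Proof.
rewrite /S !trmx_mul !tr_diag_mx trmxK !mulmxA; congr (_ *m _ *m _).
rewrite -!mulmxA; congr (_ *m (_ *m _)).
by apply/matrixP=> i j; rewrite !mxE addrC.
Qed.

Section Vector.
Variable y : 'cV[R]_n.
Let w := Dsqrt *m (U^T *m y).

Lemma whitened_quadform : w^T *m S *m w = y^T *m (X + X^T) *m y.
Proof.
rewrite /w /S trmx_mul tr_diag_mx trmx_mul trmxK !mulmxA.
rewrite -[_ *m Dsqrt *m Dsqrt_inv]mulmxA (mulmx1C Dsqrt_invK) mulmx1.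
rewrite -[_ *m U *m U^T]mulmxA UUt mulmx1.
rewrite -[_ *m Dsqrt_inv *m Dsqrt]mulmxA Dsqrt_invK mulmx1.
by rewrite -[_ *m U *m U^T]mulmxA UUt mulmx1.
Qed.

Lemma whitened_sqnorm : w^T *m w = (X^T *m y)^T *m (X^T *m y).
Proof.
rewrite /w trmx_mul tr_diag_mx mulmxA -[_ *m Dsqrt *m Dsqrt]mulmxA Dsqrt_sqr.
rewrite [(X^T *m y)^T]trmx_mul trmxK mulmxA -[y^T *m X *m X^T]mulmxA XXt_eig.
by rewrite trmx_mul trmxK !mulmxA.
Qed.

End Vector.

Lemma sqnorm_trmx_lbound : exists2 m : R, 0 < m &
  forall y : 'cV[R]_n,
    m * (y^T *m y) 0 0 <= ((X^T *m y)^T *m (X^T *m y)) 0 0.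
Proof.
have [m m_gt0 m_le] := pos_lbound d_gt0.
exists m => // y; rewrite -whitened_sqnorm.
have -> : y^T *m y = (U^T *m y)^T *m (U^T *m y).
  by rewrite trmx_mul trmxK mulmxA -[y^T *m U *m U^T]mulmxA UUt mulmx1.
rewrite !sqnormE mulr_sumr; apply: ler_sum => k _.
rewrite mul_diag_mx !mxE exprMn sqr_sqrtr; last exact: ltW.
by rewrite ler_wpM2r ?sqr_ge0.
Qed.

Lemma quadform_addmx_tr (y : 'cV[R]_n) :
  (y^T *m (X + X^T) *m y) 0 0 = 2 * (y^T *m (X^T *m y)) 0 0.
Proof.
rewrite mulmxDr mulmxDl mxE mulmxA -[y^T *m X *m y]trmx_mx11.
by rewrite !trmx_mul trmxK mulmxA mxE; lra.
Qed.

Lemma whitened_contraction (mu : R) : 0 < mu ->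
  (forall a, eigenvalue S a -> mu < a) ->
  exists2 c : R, 0 < c & forall y : 'cV[R]_n,
    (((1%:M - mu *: X)^T *m y)^T *m ((1%:M - mu *: X)^T *m y)) 0 0
      + c * (y^T *m y) 0 0 <= (y^T *m y) 0 0.
Proof.
move=> mu_gt0 /(sym_eigenvalue_gap whitened_sym) [e e_gt0 S_gap].
have [m m_gt0 m_le] := sqnorm_trmx_lbound.
exists (mu * e * m) => [|y]; first by rewrite !mulr_gt0.
have -> : (1%:M - mu *: X)^T *m y = y - mu *: (X^T *m y).
  by rewrite linearB /= trmx1 linearZ /= mulmxBl mul1mx -scalemxAl.
have := S_gap (Dsqrt *m (U^T *m y)).
rewrite whitened_quadform whitened_sqnorm quadform_addmx_tr sqnorm_subZ.
move=> /(ler_wpM2l (ltW mu_gt0)) gap.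
have := ler_wpM2l (ltW (mulr_gt0 mu_gt0 e_gt0)) (m_le y); nra.
Qed.

End Whitening.

Section SpectralNorm.
Variable R : realType.

Lemma vnormE n (v : 'cV[R]_n) : vnorm v = Num.sqrt ((v^T *m v) 0 0).
Proof. by rewrite sqnormE. Qed.

Lemma spectral_norm_le m n (B : 'M[R]_(m, n)) (b : R) : 0 <= b ->
  (forall x : 'cV[R]_n, vnorm x = 1 -> vnorm (B *m x) <= b) ->
  spectral_norm B <= b.
Proof.
move=> b_ge0 B_le; rewrite /spectral_norm.
set E := (X in sup X).
have [->|/set0P E_neq0] := eqVneq E set0; first by rewrite sup0.
by apply: ge_sup => // _ [x /= x1 <-]; apply: B_le.
Qed.

Lemma spectral_norm_lt1 n (A : 'M[R]_n) (c : R) : 0 < c ->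
  (forall x : 'cV[R]_n,
    (1 + c) * ((A *m x)^T *m (A *m x)) 0 0 <= (x^T *m x) 0 0) ->
  spectral_norm A < 1.
Proof.
move=> c_gt0 A_le; have c1_gt0 : 0 < 1 + c by rewrite ltr_wpDr // ltW.
apply: (@le_lt_trans _ _ (Num.sqrt (1 + c)^-1)); last first.
  by rewrite -[X in _ < X]sqrtr1 ltr_sqrt // invf_lt1 // ltrDl.
apply: spectral_norm_le => [|x]; first exact: sqrtr_ge0.
rewrite !vnormE => x1; rewrite ler_sqrt; last by rewrite invr_ge0 ltW.
have x1' : (x^T *m x) 0 0 = 1.
  by rewrite -(sqr_sqrtr (sqnorm_ge0 x)) x1 expr1n.
by rewrite -[(1 + c)^-1]mulr1 ler_pdivlMl // -[X in _ <= X]x1' A_le.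
Qed.

(* [inf] of a set without lower bound is 0, whence the hypothesis [0 <= mu]. *)
Lemma lambda_min_lt_eigenvalue n (S : 'M[R]_n) (mu a : R) :
  0 <= mu -> mu < lambda_min S -> eigenvalue S a -> mu < a.
Proof.
move=> mu_ge0 mu_lt Sa.
have [S_lb|S_nlb] := pselect (has_lbound [set a : R | eigenvalue S a]).
  exact: lt_le_trans mu_lt (ge_inf _ _).
by move: mu_lt; rewrite /lambda_min inf_out ?ltNge ?mu_ge0 // => -[].
Qed.

End SpectralNorm.

Theorem proposition6 (R : realType) (N : nat) (par : 'I_N -> nat)
  (Z : 'I_N -> 'M[R[i]]_3)
  (U : 'M[R]_(N * 3)) (d : 'I_(N * 3) -> R) (mu : R) :
  (forall n : 'I_N, par n <= n)%N ->
  (forall n : 'I_N, (Z n)^T = Z n) ->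
  Xmx par Z \in unitmx ->
  U^T *m U = 1%:M ->
  (forall k, 0 < d k) ->
  Xmx par Z *m (Xmx par Z)^T = U *m diag_mx (\row_k d k) *m U^T ->
  0 < mu ->
  mu < lambda_min
         (diag_mx (\row_k (Num.sqrt (d k))^-1) *m U^T
            *m (Xmx par Z + (Xmx par Z)^T) *m U
            *m diag_mx (\row_k (Num.sqrt (d k))^-1)) ->
  spectral_norm (1%:M - mu *: Xmx par Z) < 1.
Proof.
move=> _ _ _ U_orth d_gt0 XXt_eig mu_gt0 mu_lt.
have [c c_gt0 tr_contr] := whitened_contraction U_orth d_gt0 XXt_eig mu_gt0
  (fun a => lambda_min_lt_eigenvalue (ltW mu_gt0) mu_lt).
exact: spectral_norm_lt1 c_gt0 (sqnorm_mulmx_le_tr tr_contr).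
Qed.
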